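(* Let $A,B$ be abstract state spaces and let $\omega\in A\otimes_{\max}B$ be a state that is steering for its $B$-marginal $\omega^B$, where $\omega^B$ lies in the interior of $B_+$ (so that $\mathrm{Face}(\omega^B)=B_+$). If $\hat\omega:A^*\to B$ is injective, then $\hat\omega$ is an order-isomorphism. If moreover $B$ (and therefore $A$) is irreducible, then $\omega$ is pure in $A\otimes_{\max}B$, i.e., lies on an extremal ray of the positive cone of $A\otimes_{\max}B$.
   Context: An abstract state space is a pair $(A,u_A)$ where $A$ is a finite-dimensional real vector space with a closed, pointed, generating convex cone $A_+$, and $u_A$ is an interior point of the dual cone $A^*_+$. An observable on $A$ is a finite family of effects $a_i\in A^*_+$ with $\sum_i a_i=u_A$. $A\otimes_{\max}B$ is the space of bilinear forms on $A^*\times B^*$ nonnegative on $A^*_+\times B^*_+$; a state is such a form with $\omega(u_A,u_B)=1$; $\hat\omega:A^*\to B$ is $\hat\omega(a)(b)=\omega(a,b)$ and $\omega^B=\hat\omega(u_A)$. An ensemble for $\beta\in B_+$ is a finite family $\beta_i\in B_+$ with $\sum_i\beta_i=\beta$; $\omega$ is steering for its $B$-marginal if every ensemble $\{\beta_i\}$ for $\omega^B$ equals $\{\hat\omega(x_i)\}$ for some observable $\{x_i\}$ on $A$. $\mathrm{Face}(\beta)$ is the smallest face of $B_+$ containing $\beta$. An order-isomorphism is a linear bijection $\phi$ with $\phi(x)\ge0$ iff $x\ge0$. An ordered linear space is irreducible if it is not an ordered direct sum of two nonzero ordered subspaces. *)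

(* Coordinates: a finite-dimensional real ordered space A is modelled as
   'rV[R]_n with positive cone KA : set 'rV_n; its dual A^* is modelled as
   'rV[R]_n via the standard pairing  pair f x = \sum_i f_i x_i. *)
From mathcomp Require Import all_boot all_order all_algebra.
From mathcomp Require Import all_classical all_reals all_analysis.
Import numFieldNormedType.Exports.
Set Implicit Arguments. Unset Strict Implicit. Unset Printing Implicit Defensive.
Import Order.TTheory GRing.Theory Num.Theory.
Local Open Scope classical_set_scope.
Local Open Scope ring_scope.

Definition pair (R : realType) (n : nat) (f x : 'rV[R]_n) : R :=
  \sum_(i < n) f 0 i * x 0 i.

Definition convex_cone (R : realType) (n : nat) (K : set 'rV[R]_n) : Prop :=
  K 0 /\ (forall x y, K x -> K y -> K (x + y)) /\
  (forall (c : R) x, 0 <= c -> K x -> K (c *: x)).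

Definition pointed (R : realType) (n : nat) (K : set 'rV[R]_n) : Prop :=
  forall x, K x -> K (- x) -> x = 0.

Definition generating (R : realType) (n : nat) (K : set 'rV[R]_n) : Prop :=
  forall x, exists p q, K p /\ K q /\ x = p - q.

Definition dual_cone (R : realType) (n : nat) (K : set 'rV[R]_n) : set 'rV[R]_n :=
  [set f | forall x, K x -> 0 <= pair f x].

Definition state_space (R : realType) (n : nat) (K : set 'rV[R]_n) (u : 'rV[R]_n) : Prop :=
  [/\ convex_cone K, closed K, pointed K, generating K & (dual_cone K)° u].

Definition observable (R : realType) (n : nat) (K : set 'rV[R]_n) (u : 'rV[R]_n)
  (k : nat) (a : 'I_k -> 'rV[R]_n) : Prop :=
  (forall i, dual_cone K (a i)) /\ \sum_(i < k) a i = u.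

(* A (x) B ~ n x m matrices W;  omega(f, g) = f W g^T  for f in A^*, g in B^*. *)
Definition omega (R : realType) (n m : nat) (W : 'M[R]_(n, m))
  (f : 'rV[R]_n) (g : 'rV[R]_m) : R := pair g (f *m W).

Definition omega_hat (R : realType) (n m : nat) (W : 'M[R]_(n, m))
  (f : 'rV[R]_n) : 'rV[R]_m := f *m W.

Definition max_tensor_cone (R : realType) (n m : nat)
  (KA : set 'rV[R]_n) (KB : set 'rV[R]_m) : set 'M[R]_(n, m) :=
  [set W | forall f g, dual_cone KA f -> dual_cone KB g -> 0 <= omega W f g].

Definition is_state (R : realType) (n m : nat)
  (KA : set 'rV[R]_n) (uA : 'rV[R]_n) (KB : set 'rV[R]_m) (uB : 'rV[R]_m)
  (W : 'M[R]_(n, m)) : Prop :=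
  max_tensor_cone KA KB W /\ omega W uA uB = 1.

Definition marginalB (R : realType) (n m : nat) (W : 'M[R]_(n, m)) (uA : 'rV[R]_n) :=
  omega_hat W uA.

Definition ensemble (R : realType) (m : nat) (KB : set 'rV[R]_m) (beta : 'rV[R]_m)
  (k : nat) (b : 'I_k -> 'rV[R]_m) : Prop :=
  (forall i, KB (b i)) /\ \sum_(i < k) b i = beta.

Definition steering (R : realType) (n m : nat)
  (KA : set 'rV[R]_n) (uA : 'rV[R]_n) (KB : set 'rV[R]_m) (W : 'M[R]_(n, m)) : Prop :=
  forall (k : nat) (b : 'I_k -> 'rV[R]_m), ensemble KB (marginalB W uA) b ->
    exists x : 'I_k -> 'rV[R]_n, observable KA uA x /\ forall i, omega_hat W (x i) = b i.

Definition order_iso (R : realType) (n m : nat) (KV : set 'rV[R]_n) (KU : set 'rV[R]_m)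
  (phi : 'rV[R]_n -> 'rV[R]_m) : Prop :=
  linear phi /\ bijective phi /\ forall x, KU (phi x) <-> KV x.

Definition subspace (R : realType) (n : nat) (U : set 'rV[R]_n) : Prop :=
  U 0 /\ (forall x y, U x -> U y -> U (x + y)) /\ (forall (c : R) x, U x -> U (c *: x)).

Definition ordered_direct_sum (R : realType) (n : nat) (K : set 'rV[R]_n)
  (U1 U2 : set 'rV[R]_n) : Prop :=
  [/\ subspace U1, subspace U2,
      (forall x, U1 x -> U2 x -> x = 0),
      (forall x, exists x1 x2, U1 x1 /\ U2 x2 /\ x = x1 + x2) &
      (forall x, K x <-> exists x1 x2, U1 x1 /\ K x1 /\ U2 x2 /\ K x2 /\ x = x1 + x2)].

Definition irreducible (R : realType) (n : nat) (K : set 'rV[R]_n) : Prop :=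
  ~ exists U1 U2 : set 'rV[R]_n,
      ordered_direct_sum K U1 U2 /\ (exists x, U1 x /\ x <> 0) /\ (exists y, U2 y /\ y <> 0).

Definition extremal_ray (R : realType) (n m : nat) (C : set 'M[R]_(n, m)) (W : 'M[R]_(n, m)) : Prop :=
  C W /\ W <> 0 /\
  forall W1 W2, C W1 -> C W2 -> W = W1 + W2 -> exists c : R, 0 <= c /\ W1 = c *: W.

From Pilot Require Import Defs.
From mathcomp Require Import all_boot all_order all_algebra.
From mathcomp Require Import all_classical all_reals all_analysis.
From mathcomp Require Import ring lra.
Import numFieldNormedType.Exports.
Import Order.TTheory GRing.Theory Num.Theory.
Local Open Scope classical_set_scope.
Local Open Scope ring_scope.
Set Implicit Arguments. Unset Strict Implicit. Unset Printing Implicit Defensive.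

(* Steering with an interior marginal writes every beta in B_+ as omega_hat f with
   f in A*_+ (for small t > 0, t beta and omega^B - t beta form an ensemble); with
   positivity of omega and the bipolar theorem B_+ = B_+**, omega_hat maps A*_+ exactly
   onto B_+. For purity, a splitting omega = omega1 + omega2 in the maximal cone gives
   P = omega_hat1 o omega_hat^-1 with 0 <= P <= id on B_+. Such a P scales every extreme
   ray of B_+, and B_+ is the sum of its extreme rays (finite-dimensional Krein-Milman),
   so B is the ordered direct sum of an eigenspace of P and the span of the remaining
   eigenvectors; irreducibility forces P = c id, i.e. omega1 = c omega. *)

Section Pairing.
Variables (R : realType) (m : nat).
Implicit Types (f g x y : 'rV[R]_m) (a : R).

Lemma pairC f x : pair f x = pair x f.
Proof. by apply: eq_bigr => i _; rewrite mulrC. Qed.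

Lemma pairDr f x y : pair f (x + y) = pair f x + pair f y.
Proof. by rewrite /pair -big_split; apply: eq_bigr => i _; rewrite mxE mulrDr. Qed.

Lemma pairZr a f x : pair f (a *: x) = a * pair f x.
Proof. by rewrite /pair mulr_sumr; apply: eq_bigr => i _; rewrite mxE mulrCA. Qed.

Lemma pairNr f x : pair f (- x) = - pair f x.
Proof. by rewrite -scaleN1r pairZr mulN1r. Qed.

Lemma pairBr f x y : pair f (x - y) = pair f x - pair f y.
Proof. by rewrite pairDr pairNr. Qed.

Lemma pair0r f : pair f 0 = 0.
Proof. by rewrite -(scale0r 0) pairZr mul0r. Qed.

Lemma pairDl f g x : pair (f + g) x = pair f x + pair g x.
Proof. by rewrite !(pairC _ x) pairDr. Qed.

Lemma pairZl a f x : pair (a *: f) x = a * pair f x.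
Proof. by rewrite !(pairC _ x) pairZr. Qed.

Lemma pairNl f x : pair (- f) x = - pair f x.
Proof. by rewrite !(pairC _ x) pairNr. Qed.

Lemma pair_delta i x : pair (delta_mx 0 i) x = x 0 i.
Proof.
rewrite /pair (bigD1 i) //= big1 ?addr0; first by rewrite mxE !eqxx mul1r.
by move=> j /negbTE ji; rewrite mxE ji andbF mul0r.
Qed.

Lemma coord_sqr_le_pair x i : x 0 i ^+ 2 <= pair x x.
Proof.
by rewrite /pair (bigD1 i) //= -expr2 lerDl sumr_ge0 // => j _; rewrite -expr2 sqr_ge0.
Qed.

Lemma pair_self_ge0 x : 0 <= pair x x.
Proof. by rewrite sumr_ge0 // => i _; rewrite -expr2 sqr_ge0. Qed.

Lemma pair_self_eq0 x : pair x x = 0 -> x = 0.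
Proof.
move=> x0; apply/rowP => i; rewrite mxE; apply/eqP; rewrite -sqrf_eq0 eq_le sqr_ge0.
by rewrite -x0 coord_sqr_le_pair.
Qed.

End Pairing.

Lemma interior_ball (R : realType) m (A : set 'rV[R]_m) x :
  A° x -> exists2 e : R, 0 < e & forall y, `|y| < e -> A (x + y).
Proof.
move=> /nbhs_ballP [e e0 e_ball]; exists e => // y y_small; apply: e_ball.
by rewrite -ball_normE /= opprD addrA subrr add0r normrN.
Qed.

Lemma norm_delta_le1 (R : realType) m (i : 'I_m) : `|delta_mx 0 i : 'rV[R]_m| <= 1.
Proof.
rewrite [leLHS]/Num.norm /= mx_normrE; apply: bigmax_le => // ij _; rewrite mxE.
by case: (_ && _); rewrite ?normr1 ?normr0.
Qed.

Section DualInterior.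
Variables (R : realType) (m : nat) (K : set 'rV[R]_m) (u : 'rV[R]_m).
Hypothesis u_int : (dual_cone K)° u.

(* Perturbing [u] against the sign of one coordinate of [x] stays in the dual cone. *)
Lemma dual_interior_coord_bound :
  exists2 c : R, 0 < c & forall x i, K x -> c * `|x 0 i| <= pair u x.
Proof.
have [e e0 e_ball] := interior_ball u_int; exists (e / 2); first by rewrite divr_gt0.
move=> x i Kx; pose g : 'rV_m := (- (e / 2 * Num.sg (x 0 i))) *: delta_mx 0 i.
have g_small : `|g| < e.
  rewrite mx_normZ normrN normrM normr_sg.
  apply: (@le_lt_trans _ _ (e / 2)); last by rewrite ltr_pdivrMr // ltr_pMr // ltr1n.
  rewrite (ger0_norm (ltW (divr_gt0 e0 (ltr0n _ 2)))) -(mulrA (e / 2)).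
  apply: ler_piMr; first by rewrite ltW // divr_gt0.
  by case: (_ != 0); rewrite ?mul1r ?mul0r ?norm_delta_le1.
have := e_ball g g_small x Kx; rewrite pairDl /g pairZl pair_delta.
by rewrite mulNr -(mulrA (e / 2)) -normrEsg subr_ge0.
Qed.

Lemma dual_interior_gt0 x : K x -> x != 0 -> 0 < pair u x.
Proof.
have [c c0 c_bound] := dual_interior_coord_bound => Kx /rV0Pn [i xi].
by apply: lt_le_trans (c_bound _ i Kx); rewrite mulr_gt0 // normr_gt0.
Qed.

Lemma dual_interior_ray_bounded x d : d != 0 -> pair u d = 0 ->
  exists B : R, forall t, 0 <= t -> K (x + t *: d) -> t <= B.
Proof.
have [c c0 c_bound] := dual_interior_coord_bound => /rV0Pn [i di] ud.
exists ((pair u x / c + `|x 0 i|) / `|d 0 i|) => t t0 Kt.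
have dpos : 0 < `|d 0 i| by rewrite normr_gt0.
rewrite ler_pdivlMr //.
have := c_bound _ i Kt; rewrite pairDr pairZr ud mulr0 addr0 !mxE => u_bound.
have coord_bound : `|x 0 i + t * d 0 i| <= pair u x / c by rewrite ler_pdivlMr // mulrC.
have := ler_normB (x 0 i + t * d 0 i) (x 0 i).
rewrite addrAC subrr add0r normrM (ger0_norm t0); lra.
Qed.

End DualInterior.

Lemma closed_ray_max (R : realType) m (K : set 'rV[R]_m) x d (B : R) :
  closed K -> K x -> (forall t, 0 <= t -> K (x + t *: d) -> t <= B) ->
  exists t, [/\ 0 <= t, K (x + t *: d) & forall s, 0 <= s -> K (x + s *: d) -> s <= t].
Proof.
move=> K_closed Kx t_bound.
pose S := [set t : R | 0 <= t] `&` ((fun t : R => x + t *: d) @^-1` K).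
have S_closed : closed S.
  apply: closedI; first exact: closed_ge.
  apply: (proj1 (continuous_closedP _)) K_closed => t.
  apply: (@continuousD _ _ _ (cst x) (fun t : R => t *: d)); first exact: cst_continuous.
  exact: continuousZr_tmp.
have B0 : 0 <= B by apply: t_bound; rewrite ?scale0r ?addr0.
have S_compact : compact S.
  apply: (subclosed_compact S_closed (@segment_compact _ 0 B)).
  by move=> t [/= t0 Kt]; rewrite /= in_itv /= t0 /= t_bound.
have S_nonempty : S !=set0 by exists 0; split => //=; rewrite scale0r addr0.
have [c Sc c_max] := compact_EVT_max S_nonempty S_compact (continuous_subspaceT (fun t => cvg_id)).
move: Sc; rewrite inE => -[c0 Kc]; exists c; split => // s s0 Ks.
by apply: c_max; rewrite inE.
Qed.

Section Bipolar.
Variables (R : realType) (m : nat).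
Implicit Types (z p k : 'rV[R]_m) (K : set 'rV[R]_m).

Definition sqdist z p := pair (z - p) (z - p).

Lemma continuous_sqdist z : continuous (sqdist z).
Proof.
have -> : sqdist z = fun p => \sum_(i <- index_enum 'I_m) (z 0 i - p 0 i) * (z 0 i - p 0 i).
  by apply: funext => p; apply: eq_bigr => i _; rewrite !mxE.
apply: continuous_big => [[x y]|i _ p]; first exact: add_continuous.
have cz : continuous (fun p : 'rV[R]_m => z 0 i - p 0 i).
  by move=> q; apply: continuousB; [exact: cst_continuous | exact: coord_continuous].
exact: continuousM (cz p) (cz p).
Qed.

Lemma sqdist_shift z p k (t : R) :
  sqdist z (p + t *: k) = sqdist z p + 2 * t * pair (p - z) k + t ^+ 2 * pair k k.
Proof.
rewrite /sqdist.
have -> : z - (p + t *: k) = (z - p) + (- t) *: k by rewrite scaleNr opprD addrA.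
rewrite -(opprB z p); move: (z - p) => a.
rewrite pairNl pairDl !pairDr !pairZl !pairZr (pairC a k); ring.
Qed.

Lemma exists_nearest K z :
  closed K -> K 0 -> exists2 p, K p & forall k, K k -> sqdist z p <= sqdist z k.
Proof.
move=> K_closed K0; pose A := K `&` [set p | sqdist z p <= sqdist z 0].
have A_closed : closed A.
  apply: closedI => //.
  exact: (proj1 (continuous_closedP _) (@continuous_sqdist z))
    [set x | x <= sqdist z 0] (@closed_le _ (sqdist z 0)).
have A_bounded : bounded_set A.
  exists (2 + 2 * pair z z); split; first by rewrite num_real.
  move=> M M_gt p [_ p_level]; rewrite /= [leLHS]/Num.norm /= mx_normrE.
  apply: bigmax_le => [|[i j] _ /=].
    by apply: le_trans (ltW M_gt); rewrite addr_ge0 // mulr_ge0 // pair_self_ge0.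
  have norm_le (w : R) : `|w| <= 1 + w ^+ 2.
    by case: (lerP 0 w) => h; [rewrite ger0_norm | rewrite ltr0_norm]; nra.
  rewrite (ord1 i); apply: le_trans (ltW M_gt).
  have -> : p 0 j = z 0 j - (z - p) 0 j by rewrite !mxE opprB addrC subrK.
  apply: le_trans (ler_normB _ _) _.
  have := norm_le (z 0 j); have := norm_le ((z - p) 0 j).
  have := coord_sqr_le_pair z j; have := coord_sqr_le_pair (z - p) j.
  move: p_level; rewrite /= /sqdist subr0; lra.
have [p pA p_min] := EVT_min_rV (ex_intro _ 0 (conj K0 (lexx _)) : A !=set0)
  (bounded_closed_compact A_bounded A_closed) (continuous_subspaceT (@continuous_sqdist z)).
move: pA; rewrite inE => -[Kp p_level]; exists p => // k Kk.
have [kz|kz] := lerP (sqdist z k) (sqdist z 0); first by apply: p_min; rewrite inE.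
exact: le_trans p_level (ltW kz).
Qed.

Lemma ge0_first_order (a b : R) :
  0 <= b -> (forall t, 0 < t -> t <= 1 -> 0 <= 2 * t * a + t ^+ 2 * b) -> 0 <= a.
Proof.
move=> b0 small_t; rewrite leNgt; apply/negP => a0.
have d0 : 0 < b + 1 - a by lra.
pose t := - a / (b + 1 - a).
have ht : t * (b + 1 - a) = - a by rewrite /t mulrVK // unitfE gt_eqF.
have t0 : 0 < t by rewrite /t divr_gt0 // oppr_gt0.
have t1 : t <= 1 by rewrite /t ler_pdivrMr // mul1r; lra.
have := small_t t t0 t1; rewrite expr2; nra.
Qed.

Lemma nearest_variational K z p k :
  (forall q, K q -> sqdist z p <= sqdist z q) ->
  (forall t, 0 < t -> t <= 1 -> K (p + t *: k)) -> 0 <= pair (p - z) k.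
Proof.
move=> p_nearest pk_in; apply: (ge0_first_order (pair_self_ge0 k)) => t t0 t1.
by have := p_nearest _ (pk_in t t0 t1); rewrite sqdist_shift -addrA lerDl.
Qed.

Lemma bipolar K z : convex_cone K -> closed K ->
  (forall g, dual_cone K g -> 0 <= pair g z) -> K z.
Proof.
move=> [K0 [KD KZ]] K_closed z_bidual; have [p Kp p_nearest] := exists_nearest z K_closed K0.
have pz_dual : dual_cone K (p - z).
  move=> k Kk; apply: nearest_variational p_nearest _ => t t0 _.
  by apply: KD => //; apply: KZ => //; apply: ltW.
have pz_p : 0 <= pair (p - z) (- p).
  apply: nearest_variational p_nearest _ => t _ t1.
  by rewrite scalerN -{1}(scale1r p) -scalerBl; apply: KZ => //; rewrite subr_ge0.
have pz_z := z_bidual _ pz_dual.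
have : sqdist z p <= 0.
  have -> : sqdist z p = pair (p - z) p - pair (p - z) z.
    by rewrite /sqdist -(opprB p z) pairNl pairNr opprK pairBr.
  by move: pz_p; rewrite pairNr; lra.
rewrite le_eqVlt ltNge pair_self_ge0 orbF => /eqP /pair_self_eq0 /eqP.
by rewrite subr_eq0 => /eqP ->.
Qed.

End Bipolar.

Section Steering.
Variables (R : realType) (n m : nat).
Variables (KA : set 'rV[R]_n) (uA : 'rV[R]_n) (KB : set 'rV[R]_m) (W : 'M[R]_(n, m)).
Hypotheses (KB_cone : convex_cone KB) (W_steering : steering KA uA KB W).
Hypothesis marginal_interior : KB° (marginalB W uA).

Lemma steering_onto_cone beta :
  KB beta -> exists2 f, dual_cone KA f & omega_hat W f = beta.
Proof.
have [_ [_ KZ]] := KB_cone; have [e e0 e_ball] := interior_ball marginal_interior.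
move=> Kbeta; pose t := e / (`|beta| + 1).
have t0 : 0 < t by rewrite divr_gt0 // ltr_wpDl.
have small : `|- (t *: beta)| < e.
  rewrite normrN normrZ gtr0_norm // /t mulrAC ltr_pdivrMr ?ltr_wpDl //.
  by rewrite ltr_pM2l // ltrDl.
pose b (i : 'I_2) := if i == ord0 then t *: beta else marginalB W uA - t *: beta.
have b_ens : ensemble KB (marginalB W uA) b.
  split; last by rewrite big_ord_recl big_ord1 /b /= addrC subrK.
  by move=> i; rewrite /b; case: (i == ord0); [apply: KZ; rewrite // ltW | apply: e_ball].
have [x [[x_eff _] x_b]] := W_steering b_ens.
exists (t^-1 *: x ord0).
  by move=> y Ky; rewrite pairZl mulr_ge0 ?invr_ge0 ?(ltW t0) ?x_eff.
by rewrite /omega_hat -scalemxAl [_ *m _]x_b /b eqxx scalerA mulVf ?gt_eqF ?scale1r.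
Qed.

Lemma steering_row_full : generating KB -> forall y : 'rV_m, (y <= W)%MS.
Proof.
move=> KB_gen y; have [p [q [Kp [Kq ->]]]] := KB_gen y.
have [f _ <-] := steering_onto_cone Kp; have [g _ <-] := steering_onto_cone Kq.
by rewrite /omega_hat -mulmxBl submxMl.
Qed.

Lemma steering_order_iso :
  closed KB -> generating KB -> max_tensor_cone KA KB W -> injective (omega_hat W) ->
  order_iso (dual_cone KA) KB (omega_hat W).
Proof.
move=> KB_closed KB_gen W_pos W_inj.
have W_free : row_free W.
  by apply: inj_row_free => v vW0; apply: W_inj; rewrite /omega_hat vW0 mul0mx.
split; first by move=> a f g; rewrite /omega_hat mulmxDl scalemxAl.
split.
  exists (mulmx^~ (pinvmx W)); first exact: mulmxKp.
  by move=> y; apply: mulmxKpV; apply: steering_row_full.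
move=> f; split => [/steering_onto_cone [g g_dual /W_inj <-] // | f_dual].
by apply: bipolar => // g g_dual; apply: W_pos.
Qed.

End Steering.

Lemma subspace_submx (R : realType) m (U : set 'rV[R]_m) r (M : 'M[R]_(r, m)) v :
  Defs.subspace U -> (forall i, U (row i M)) -> (v <= M)%MS -> U v.
Proof.
move=> [U0 [UD UZ]] UM /submxP [D ->]; rewrite mulmx_sum_row.
by elim/big_ind: _ => // i _; apply: UZ.
Qed.

Lemma mxrank_col_mx_ltn (R : fieldType) m r (M : 'M[R]_(r, m)) (e : 'rV[R]_m) :
  ~~ (e <= M)%MS -> (\rank M < \rank (col_mx M e))%N.
Proof.
move=> eM; have MeM : (M <= col_mx M e)%MS by rewrite -addsmxE addsmxSl.
by rewrite (ltn_leqif (mxrank_leqif_sup MeM)) -addsmxE addsmx_sub submx_refl.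
Qed.

Section ExtremeDecomposition.
Variables (R : realType) (m : nat) (K : set 'rV[R]_m).
Hypothesis K_cone : convex_cone K.

Let K0 : K 0 := K_cone.1.
Let KD : forall x y, K x -> K y -> K (x + y) := K_cone.2.1.
Let KZ : forall (c : R) x, 0 <= c -> K x -> K (c *: x) := K_cone.2.2.

(* The span of [Face x]: the [y] with [- s x <= y <= s x] for some [s]. *)
Definition order_ideal (x : 'rV[R]_m) : set 'rV[R]_m :=
  [set y | exists2 s : R, 0 <= s & K (s *: x - y) /\ K (s *: x + y)].

(* [dim (order_ideal x) <= k], phrased through the ranks of row families. *)
Definition ideal_dim_le (k : nat) (x : 'rV[R]_m) :=
  forall r (M : 'M[R]_(r, m)), (forall i, order_ideal x (row i M)) -> (\rank M <= k)%N.

Definition extreme (x : 'rV[R]_m) :=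
  K x /\ forall y z, K y -> K z -> x = y + z -> exists c : R, y = c *: x.

Definition extreme_sum (x : 'rV[R]_m) :=
  exists s : seq 'rV[R]_m, {in s, forall v, extreme v} /\ x = \sum_(v <- s) v.

Lemma order_ideal_subspace x : Defs.subspace (order_ideal x).
Proof.
split; first by exists 0; rewrite // scale0r subr0 addr0.
split=> [y1 y2 [s1 s1_ge0 [K1 K1']] [s2 s2_ge0 [K2 K2']]|c y [s s_ge0 [Ky Ky']]].
  exists (s1 + s2); first exact: addr_ge0.
  by rewrite scalerDl opprD; split; rewrite addrACA; apply: KD.
exists (`|c| * s); first by rewrite mulr_ge0.
have [c_ge0|c_lt0] := lerP 0 c.
  by rewrite ger0_norm // -scalerA -scalerBr -scalerDr; split; apply: KZ.
rewrite ltr0_norm //.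
have -> : (- c * s) *: x - c *: y = (- c) *: (s *: x + y) by rewrite scalerDr scalerA scaleNr.
have -> : (- c * s) *: x + c *: y = (- c) *: (s *: x - y).
  by rewrite scalerBr scalerA scaleNr opprK.
by split; apply: KZ; rewrite // oppr_ge0 ltW.
Qed.

Lemma order_ideal_refl x : K x -> order_ideal x x.
Proof. by move=> Kx; exists 1; rewrite // scale1r subrr; split; last apply: KD. Qed.

Lemma order_idealS x z (s : R) :
  0 <= s -> K (s *: x - z) -> order_ideal z `<=` order_ideal x.
Proof.
move=> s_ge0 Kxz y [r r_ge0 [Ky Ky']]; exists (r * s); first exact: mulr_ge0.
have split_rs v : (r * s) *: x + v = r *: (s *: x - z) + (r *: z + v).
  by rewrite scalerBr addrA subrK scalerA.
by rewrite !split_rs; split; apply: KD => //; apply: KZ.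
Qed.

Lemma order_ideal_escape z d : K z -> order_ideal z d ->
  exists2 eps : R, 0 < eps & K (z + eps *: d) /\ K (z - eps *: d).
Proof.
move=> Kz [s s_ge0 [Kzd Kzd']]; have s1_gt0 : 0 < s + 1 by rewrite ltr_wpDl.
exists (s + 1)^-1; first by rewrite invr_gt0.
have split_eps v : z + (s + 1)^-1 *: v = (s + 1)^-1 *: ((s *: z + v) + z).
  by apply/rowP => i; rewrite !mxE; field; rewrite gt_eqF.
rewrite -scalerN !split_eps; split; apply: KZ; rewrite ?invr_ge0 ?ltW //; exact: KD.
Qed.

Lemma ideal_dim_le0 x : K x -> ideal_dim_le 0 x -> x = 0.
Proof.
move=> Kx x_dim; apply/eqP; rewrite -mxrank_eq0 -leqn0; apply: (x_dim 1 x) => i.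
by rewrite row_id; apply: order_ideal_refl.
Qed.

(* At the last point of a ray inside [K], the direction [e] leaves the order
   ideal, so the ideal loses a dimension. *)
Lemma ideal_dim_le_exit k x e t :
  e != 0 -> order_ideal x e -> 0 <= t -> K (x + t *: e) ->
  (forall s, 0 <= s -> K (x + s *: e) -> s <= t) ->
  ideal_dim_le k.+1 x -> ideal_dim_le k (x + t *: e).
Proof.
move=> e0 xe t_ge0 Kt t_max x_dim r M M_ideal; have [s s_ge0 [Kse _]] := xe.
have ideal_sub : order_ideal (x + t *: e) `<=` order_ideal x.
  apply: (@order_idealS _ _ (1 + t * s)); first by rewrite addr_ge0 // mulr_ge0.
  have -> : (1 + t * s) *: x - (x + t *: e) = t *: (s *: x - e).
    by apply/rowP => i; rewrite !mxE; ring.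
  exact: KZ.
rewrite leqNgt; apply/negP => M_rank.
have M_rank_eq : \rank M = k.+1.
  by apply/eqP; rewrite eqn_leq M_rank x_dim // => i; apply: ideal_sub.
have [eM|eNM] := boolP (e <= M)%MS.
  have [eps eps0 [Ke _]] := order_ideal_escape Kt
    (subspace_submx (order_ideal_subspace _) M_ideal eM).
  have : t + eps <= t.
    by apply: t_max; [exact: addr_ge0 t_ge0 (ltW eps0) | rewrite scalerDl addrA].
  by rewrite gerDl leNgt eps0.
have := mxrank_col_mx_ltn eNM; rewrite M_rank_eq ltnNge x_dim // => i.
rewrite -(fintype.splitK i); case: (fintype.split i) => j /=.
  by rewrite rowKu; apply: ideal_sub.
by rewrite rowKd row_id.
Qed.

Hypotheses (K_closed : closed K) (K_pointed : pointed K).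
Variable u : 'rV[R]_m.
Hypothesis u_int : (dual_cone K)° u.

Lemma extreme0 : extreme 0.
Proof.
split=> // y z Ky Kz /eqP; rewrite eq_sym addr_eq0 => /eqP yz.
by exists 0; rewrite scaler0; apply: K_pointed; rewrite // yz opprK.
Qed.

Lemma extremeZ (c : R) x : 0 <= c -> extreme x -> extreme (c *: x).
Proof.
rewrite le_eqVlt => /orP [/eqP <-|c_gt0] [Kx x_ext]; first by rewrite scale0r; apply: extreme0.
split=> [|y z Ky Kz xyz]; first by apply: KZ; rewrite ?ltW.
have c_inv : 0 <= c^-1 by rewrite invr_ge0 ltW.
have xyz' : x = c^-1 *: y + c^-1 *: z.
  by rewrite -scalerDr -xyz scalerA mulVf ?gt_eqF ?scale1r.
have [a ya] := x_ext _ _ (KZ c_inv Ky) (KZ c_inv Kz) xyz'.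
by exists a; rewrite scalerA mulrC -scalerA -ya scalerA divff ?gt_eqF ?scale1r.
Qed.

Lemma extreme_sumD x y : extreme_sum x -> extreme_sum y -> extreme_sum (x + y).
Proof.
move=> [s1 [ext1 ->]] [s2 [ext2 ->]]; exists (s1 ++ s2); rewrite big_cat; split=> //.
by move=> v; rewrite mem_cat => /orP [/ext1|/ext2].
Qed.

Lemma extreme_sumZ (c : R) x : 0 <= c -> extreme_sum x -> extreme_sum (c *: x).
Proof.
move=> c_ge0 [s [s_ext ->]]; exists (map (fun v => c *: v) s).
by rewrite big_map scaler_sumr; split=> // _ /mapP [v /s_ext v_ext ->]; apply: extremeZ.
Qed.

(* Split [x = y + z] with [y] off the ray of [x]; then [d = y - c x], with [c]
   chosen so that [pair u d = 0]. *)
Lemma nonextreme_direction x : K x -> ~ extreme x ->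
  exists d, [/\ d != 0, pair u d = 0 & order_ideal x d].
Proof.
move=> Kx x_ext.
have [y [z [Ky Kz xyz y_ray]]] :
    exists y z, [/\ K y, K z, x = y + z & forall c : R, y <> c *: x].
  apply: contrapT => no_split; apply: x_ext; split=> // y z Ky Kz xyz.
  apply: contrapT => y_ray; apply: no_split; exists y, z.
  by split=> // c yc; apply: y_ray; exists c.
have x0 : x != 0 by apply: contra_notN x_ext => /eqP ->; apply: extreme0.
have ux_gt0 := dual_interior_gt0 u_int Kx x0.
pose c := pair u y / pair u x; exists (y - c *: x); split.
- by rewrite subr_eq0; apply/eqP.
- by rewrite pairBr pairZr /c mulrVK ?subrr // unitfE gt_eqF.
exists (1 + `|c|); first by rewrite addr_ge0.
split.
  have -> : (1 + `|c|) *: x - (y - c *: x) = z + (`|c| + c) *: x.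
    by rewrite xyz; apply/rowP => i; rewrite !mxE; ring.
  by apply: KD => //; apply: KZ; rewrite // -lerBlDr sub0r -normrN ler_norm.
have -> : (1 + `|c|) *: x + (y - c *: x) = y + (1 + `|c| - c) *: x.
  by apply/rowP => i; rewrite !mxE; ring.
by apply: KD => //; apply: KZ; rewrite // -addrA addr_ge0 // subr_ge0 ler_norm.
Qed.

Lemma ray_exit k x d : K x -> ideal_dim_le k.+1 x ->
  [/\ d != 0, pair u d = 0 & order_ideal x d] ->
  exists2 t : R, 0 < t & K (x + t *: d) /\ ideal_dim_le k (x + t *: d).
Proof.
move=> Kx x_dim [d0 ud xd].
have [B t_bound] := dual_interior_ray_bounded u_int x d0 ud.
have [t [t_ge0 Kt t_max]] := closed_ray_max K_closed Kx t_bound.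
have [eps eps0 [Ke _]] := order_ideal_escape Kx xd.
exists t; first exact: lt_le_trans eps0 (t_max _ (ltW eps0) Ke).
by split=> //; apply: ideal_dim_le_exit.
Qed.

Lemma extreme_decomposition x : K x -> extreme_sum x.
Proof.
move=> Kx; suff : forall k x, K x -> ideal_dim_le k x -> extreme_sum x.
  by apply=> // r M _; apply: rank_leq_col.
elim=> [|k IH] {}x {}Kx x_dim.
  by rewrite (ideal_dim_le0 Kx x_dim); exists [::]; rewrite big_nil.
have [x_ext|x_ext] := pselect (extreme x).
  by exists [:: x]; rewrite big_seq1; split=> // v; rewrite inE => /eqP ->.
have [d [d0 ud xd]] := nonextreme_direction Kx x_ext.
have [t1 t1_gt0 [K1 dim1]] := ray_exit Kx x_dim (And3 d0 ud xd).
have [t2 t2_gt0 [K2 dim2]] : exists2 t2 : R, 0 < t2 &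
    K (x + t2 *: - d) /\ ideal_dim_le k (x + t2 *: - d).
  apply: ray_exit; rewrite // oppr_eq0 pairNr ud oppr0; split=> //.
  by have [_ [_ UZ]] := order_ideal_subspace x; rewrite -scaleN1r; apply: UZ.
have t12 : t1 + t2 != 0 by rewrite gt_eqF // addr_gt0.
have -> : x = (t2 / (t1 + t2)) *: (x + t1 *: d) + (t1 / (t1 + t2)) *: (x + t2 *: - d).
  by apply/rowP => i; rewrite !mxE; field.
apply: extreme_sumD; apply: extreme_sumZ; try exact: IH.
all: by apply: divr_ge0; apply: ltW; rewrite ?addr_gt0.
Qed.

End ExtremeDecomposition.

Section EigenDecomposition.
Variables (R : realType) (m : nat) (K : set 'rV[R]_m) (P : 'M[R]_m).

Definition eigenpair (p : R * 'rV[R]_m) := p.2 *m P = p.1 *: p.2.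

Definition eigen_sum (x : 'rV[R]_m) :=
  exists s : seq (R * 'rV[R]_m), {in s, forall p, K p.2 /\ eigenpair p} /\
    x = \sum_(p <- s) p.2.

Definition eigenspace_set (l : R) := [set x : 'rV[R]_m | x *m P = l *: x].

Definition other_eigen_span (l : R) := [set x : 'rV[R]_m | exists s : seq (R * 'rV[R]_m),
  {in s, forall p, p.1 != l /\ eigenpair p} /\ x = \sum_(p <- s) p.2].

Lemma extreme_eigen x :
  extreme K x -> K (x *m P) -> K (x - x *m P) -> exists c : R, x *m P = c *: x.
Proof. by move=> [_ x_ext] KxP KxP'; apply: x_ext KxP KxP' _; rewrite addrC subrK. Qed.

Lemma extreme_sum_eigen_sum x :
  (forall y, K y -> K (y *m P) /\ K (y - y *m P)) -> extreme_sum K x -> eigen_sum x.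
Proof.
move=> P_between [s [s_ext ->]]; elim: s s_ext => [|v s IH] s_ext.
  by exists [::]; rewrite !big_nil.
rewrite big_cons; have [|t [t_eig ->]] := IH.
  by move=> w ws; apply: s_ext; rewrite inE ws orbT.
have v_ext := s_ext v (mem_head _ _); have [Kv _] := v_ext.
have [c vc] := extreme_eigen v_ext (P_between v Kv).1 (P_between v Kv).2.
exists ((c, v) :: t); rewrite big_cons; split=> // p; rewrite inE => /orP [/eqP -> //|].
exact: t_eig.
Qed.

(* Applying [P - mu] to a combination kills the eigenvector of eigenvalue [mu]
   and keeps the others. *)
Lemma eigen_combination_eq0 (l : R) (s : seq (R * 'rV[R]_m)) (a : R * 'rV[R]_m -> R) x :
  x *m P = l *: x -> {in s, forall p, p.1 != l /\ eigenpair p} ->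
  x = \sum_(p <- s) a p *: p.2 -> x = 0.
Proof.
elim: s a x => [|p s IH] a x xl s_eig; first by rewrite big_nil.
have [pl p_eig] := s_eig p (mem_head _ _).
have s_eig' : {in s, forall q, q.1 != l /\ eigenpair q}.
  by move=> q qs; apply: s_eig; rewrite inE qs orbT.
rewrite big_cons => x_sum.
have : (l - p.1) *: x = 0.
  apply: (IH (fun q => a q * (q.1 - p.1))) => //.
    by rewrite -scalemxAl xl !scalerA mulrC.
  have -> : (l - p.1) *: x = x *m P - p.1 *: x by rewrite xl scalerBl.
  rewrite [in LHS]x_sum mulmxDl -scalemxAl p_eig scalerDr opprD addrACA.
  rewrite !scalerA [a p * _]mulrC subrr add0r mulmx_suml scaler_sumr -sumrB.
  apply: eq_big_seq => q qs; have [_ q_eig] := s_eig' q qs.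
  by rewrite -scalemxAl q_eig !scalerA -scalerBl mulrBr (mulrC p.1).
by move/eqP; rewrite scaler_eq0 subr_eq0 eq_sym (negbTE pl) => /eqP.
Qed.

Hypotheses (K_cone : convex_cone K) (K_gen : generating K).
Hypothesis K_eigen_sum : forall x, K x -> eigen_sum x.

Lemma eigen_sum_split (l : R) x : K x -> exists x1 x2,
  [/\ eigenspace_set l x1, K x1, other_eigen_span l x2, K x2 & x = x1 + x2].
Proof.
have [K0 [KD _]] := K_cone.
have K_sum (s : seq (R * 'rV[R]_m)) : {in s, forall p, K p.2} -> K (\sum_(p <- s) p.2).
  by move=> Ks; rewrite big_seq; elim/big_ind: _ => // p /Ks.
move=> /K_eigen_sum [s [s_eig ->]].
exists (\sum_(p <- [seq p <- s | p.1 == l]) p.2), (\sum_(p <- [seq p <- s | p.1 != l]) p.2).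
split.
- rewrite /eigenspace_set /= mulmx_suml scaler_sumr; apply: eq_big_seq => p.
  by rewrite mem_filter => /andP [/eqP <- /s_eig []].
- by apply: K_sum => p; rewrite mem_filter => /andP [_ /s_eig []].
- exists [seq p <- s | p.1 != l]; split=> // p.
  by rewrite mem_filter => /andP [pl /s_eig []].
- by apply: K_sum => p; rewrite mem_filter => /andP [_ /s_eig []].
- by rewrite !big_filter [LHS](bigID (fun p => p.1 == l)).
Qed.

Lemma ordered_direct_sum_eigen (l : R) :
  ordered_direct_sum K (eigenspace_set l) (other_eigen_span l).
Proof.
have [_ [KD _]] := K_cone.
have sub1 : Defs.subspace (eigenspace_set l).
  rewrite /eigenspace_set; split; first by rewrite /= mul0mx scaler0.
  split=> [x y /= xl yl|c x /= xl]; first by rewrite mulmxDl xl yl scalerDr.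
  by rewrite -scalemxAl xl !scalerA mulrC.
have sub2 : Defs.subspace (other_eigen_span l).
  split; first by exists [::]; rewrite big_nil.
  split=> [x y [s1 [eig1 ->]] [s2 [eig2 ->]]|c x [s [s_eig ->]]].
    exists (s1 ++ s2); rewrite big_cat; split=> // p.
    by rewrite mem_cat => /orP [/eig1|/eig2].
  exists [seq (p.1, c *: p.2) | p <- s]; rewrite big_map scaler_sumr; split=> //.
  move=> _ /mapP [p /s_eig [pl p_eig] ->]; split=> //.
  by rewrite /eigenpair /= -scalemxAl p_eig !scalerA mulrC.
split=> //.
- move=> x xl [s [s_eig x_sum]]; apply: (eigen_combination_eq0 (a := fun=> 1)) xl s_eig _.
  by under eq_bigr do rewrite scale1r.
- move=> x; have [p [q [Kp [Kq ->]]]] := K_gen x.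
  have [p1 [p2 [p1l _ p2l _ ->]]] := eigen_sum_split l Kp.
  have [q1 [q2 [q1l _ q2l _ ->]]] := eigen_sum_split l Kq.
  have [_ [D1 Z1]] := sub1; have [_ [D2 Z2]] := sub2.
  exists (p1 - q1), (p2 - q2); rewrite opprD addrACA; split; last split=> //.
    by apply: D1 => //; rewrite -scaleN1r; apply: Z1.
  by apply: D2 => //; rewrite -scaleN1r; apply: Z2.
- move=> x; split=> [Kx|[x1 [x2 [_ [K1 [_ [K2 ->]]]]]]]; last exact: KD.
  by have [x1 [x2 [x1l Kx1 x2l Kx2 ->]]] := eigen_sum_split l Kx; exists x1, x2.
Qed.

Lemma irreducible_eigen_scalar :
  irreducible K -> exists c : R, forall x : 'rV[R]_m, x *m P = c *: x.
Proof.
move=> K_irr; have [l l_span0] : exists l, forall y, other_eigen_span l y -> y = 0.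
  case: (pselect (exists (l : R) (v : 'rV[R]_m), v != 0 /\ v *m P = l *: v)).
    move=> [l [v [v0 vl]]]; exists l => y y_span; apply: contrapT => y0; apply: K_irr.
    exists (eigenspace_set l), (other_eigen_span l).
    split; first exact: ordered_direct_sum_eigen.
    by split; [exists v; split=> //; apply/eqP | exists y].
  move=> no_eigen; exists 0 => _ [s [s_eig ->]]; rewrite big_seq big1 // => p /s_eig [_ p_eig].
  by apply: contrapT => p0; apply: no_eigen; exists p.1, p.2; split=> //; apply/eqP.
exists l => x; have [_ _ _ x_split _] := ordered_direct_sum_eigen l.
by have [x1 [x2 [x1l [/l_span0 -> ->]]]] := x_split x; rewrite addr0.
Qed.

End EigenDecomposition.

Lemma irreducible_between_scalar (R : realType) m (K : set 'rV[R]_m) (u : 'rV[R]_m)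
    (P : 'M[R]_m) :
  convex_cone K -> closed K -> pointed K -> generating K -> (dual_cone K)° u ->
  irreducible K -> (forall x, K x -> K (x *m P) /\ K (x - x *m P)) ->
  exists c : R, forall x : 'rV[R]_m, x *m P = c *: x.
Proof.
move=> K_cone K_closed K_pointed K_gen u_int K_irr P_between.
apply: (irreducible_eigen_scalar K_cone K_gen _ K_irr) => x Kx.
have x_ext := extreme_decomposition K_cone K_closed K_pointed u_int Kx.
exact: extreme_sum_eigen_sum P_between x_ext.
Qed.

Lemma order_iso_extremal_ray (R : realType) n m (KA : set 'rV[R]_n)
    (KB : set 'rV[R]_m) (uB : 'rV[R]_m) (W : 'M[R]_(n, m)) (f0 : 'rV[R]_n) :
  state_space KB uB -> irreducible KB -> max_tensor_cone KA KB W ->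
  order_iso (dual_cone KA) KB (omega_hat W) ->
  dual_cone KA f0 -> omega_hat W f0 != 0 ->
  extremal_ray (max_tensor_cone KA KB) W.
Proof.
move=> [KB_cone KB_closed KB_pointed KB_gen uB_int] KB_irr W_pos.
move=> [_ [[g gK Kg] W_order]] f0_dual Wf0.
have W_free : row_free W.
  by apply: inj_row_free => v vW0; apply: (can_inj gK); rewrite /omega_hat vW0 mul0mx.
have W_full (y : 'rV_m) : y *m pinvmx W *m W = y.
  by apply: mulmxKpV; rewrite -(Kg y) submxMl.
split=> //; split=> [W0|W1 W2 W1_pos W2_pos W12].
  by move: Wf0; rewrite /omega_hat W0 mulmx0 eqxx.
(* [P] represents [omega_hat W1 \o (omega_hat W)^-1]. *)
pose P := pinvmx W *m W1.
have P_between y : KB y -> KB (y *m P) /\ KB (y - y *m P).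
  move=> Ky; have f_dual : dual_cone KA (y *m pinvmx W).
    by apply/W_order; rewrite /omega_hat W_full.
  rewrite /P mulmxA; split; first by apply: bipolar => // h h_dual; apply: W1_pos.
  have -> : y - y *m pinvmx W *m W1 = y *m pinvmx W *m W2.
    by rewrite -{1}(W_full y) W12 mulmxDr addrC addKr.
  by apply: bipolar => // h h_dual; apply: W2_pos.
have [c Pc] := irreducible_between_scalar KB_cone KB_closed KB_pointed KB_gen uB_int
  KB_irr P_between.
exists c; split.
  have KWf0 : KB (omega_hat W f0) by apply/W_order.
  have := interior_subset uB_int _ (P_between _ KWf0).1.
  by rewrite Pc pairZr (pmulr_lge0 _ (dual_interior_gt0 uB_int KWf0 Wf0)).
apply/row_matrixP => i; rewrite -[W1]mul1mx -(mulmxVp W_free) -mulmxA -/P.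
by rewrite row_mul Pc linearZ.
Qed.

Theorem corollary5p5 (R : realType) (n m : nat)
  (KA : set 'rV[R]_n) (uA : 'rV[R]_n) (KB : set 'rV[R]_m) (uB : 'rV[R]_m)
  (W : 'M[R]_(n, m)) :
  state_space KA uA -> state_space KB uB ->
  is_state KA uA KB uB W ->
  steering KA uA KB W ->
  KB° (marginalB W uA) ->
  injective (omega_hat W) ->
  order_iso (dual_cone KA) KB (omega_hat W) /\
  (irreducible KB -> extremal_ray (max_tensor_cone KA KB) W).
Proof.
move=> [_ _ _ _ uA_int] B_state [W_pos W_unit] W_steering marginal_int W_inj.
have [KB_cone KB_closed _ KB_gen _] := B_state.
have W_iso := steering_order_iso KB_cone W_steering marginal_int KB_closed KB_gen W_pos W_inj.
split=> // KB_irr.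
apply: order_iso_extremal_ray B_state KB_irr W_pos W_iso (interior_subset uA_int) _.
apply: contra_eqN W_unit => /eqP marginal0.
by rewrite /omega (marginal0 : uA *m W = 0) pair0r eq_sym oner_neq0.
Qed.
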